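(* Let $S_n=(E_{n-m},K_m)$ be a word-representable split graph with $m\geq 3$, and let $d$ be an integer with $2\leq d\leq \frac{m+1}{2}$. Then $E_{n-m}$ contains at most $m$ vertices of degree $d$ having pairwise distinct neighbourhoods. Moreover, this bound is achievable: for every such $m$ and $d$ there is a word-representable split graph $(E_{n-m},K_m)$ whose independent set contains $m$ vertices of degree $d$ with pairwise distinct neighbourhoods.
   Context: A graph $G=(V,E)$ is word-representable if there exists a word $w$ over the alphabet $V$ such that for all distinct $x,y\in V$, the letters $x$ and $y$ alternate in $w$ if and only if $xy\in E$ (alternation meaning that deleting all letters other than $x$ and $y$ leaves $xyxy\cdots$ or $yxyx\cdots$). The notation $S_n=(E_{n-m},K_m)$ denotes a split graph on $n$ vertices whose vertex set is partitioned into a maximal clique $K_m$ on $m$ vertices and an independent set $E_{n-m}$ on $n-m$ vertices. *)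

From mathcomp Require Import all_boot.
Set Implicit Arguments. Unset Strict Implicit. Unset Printing Implicit Defensive.

Definition simple_graph (T : finType) (e : rel T) : Prop :=
  irreflexive e /\ symmetric e.

(* x and y alternate in w: deleting all other letters leaves a word with no two
   equal consecutive letters, i.e. xyxy... or yxyx... *)
Definition alternate (T : eqType) (w : seq T) (x y : T) : bool :=
  sorted (fun a b => a != b) [seq z <- w | (z == x) || (z == y)].

Definition represents (T : finType) (e : rel T) (w : seq T) : Prop :=
  (forall x : T, x \in w) /\
  (forall x y : T, x != y -> (alternate w x y <-> e x y)).

Definition word_representable (T : finType) (e : rel T) : Prop :=
  exists w : seq T, represents e w.

Definition is_clique (T : finType) (e : rel T) (K : {set T}) : Prop :=
  forall x y, x \in K -> y \in K -> x != y -> e x y.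

Definition is_independent (T : finType) (e : rel T) (I : {set T}) : Prop :=
  forall x y, x \in I -> y \in I -> ~~ e x y.

(* Split graph (E, K): V partitioned into a maximal clique K and an independent set E. *)
Definition split_graph (T : finType) (e : rel T) (E K : {set T}) : Prop :=
  [/\ [disjoint E & K], E :|: K = [set: T],
      is_clique e K, is_independent e E &
      (forall v, v \notin K -> exists2 u, u \in K & ~~ e v u)].

Definition nbhd (T : finType) (e : rel T) (v : T) : {set T} := [set u | e v u].
Definition degree (T : finType) (e : rel T) (v : T) : nat := #|nbhd e v|.

(* Order the clique by first occurrence in a representing word.  Two clique
   vertices alternate, so on every prefix the earlier one occurs as often as the
   later one or once more; comparing these prefix counts shows that the clique
   vertices alternating with a fixed vertex never form an in/out/in/out pattern,
   i.e. they form an arc of the cyclic order.  A vertex of degree d outside the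
   clique therefore has one of the m arcs of length d as neighbourhood, so at
   most m such neighbourhoods are distinct.  The bound is attained by the graph
   whose m independent vertices are adjacent to these m arcs: it is represented
   by m + 1 rounds of the clique, with the independent vertex a placed before
   clique vertex a in each round, except that its copy of round a + 1 is moved
   back in front of clique vertex a + d. *)

From mathcomp Require Import all_boot zify.
Set Implicit Arguments. Unset Strict Implicit. Unset Printing Implicit Defensive.

Section Leads.
Variable T : eqType.
Implicit Types (w : seq T) (x y : T).

Definition pcount w p x := count_mem x (take p w).

Definition leads w x y := forall p, pcount w p y <= pcount w p x <= (pcount w p y).+1.

Lemma pcount0 w x : pcount w 0 x = 0.
Proof. by rewrite /pcount take0. Qed.

Lemma pcount_cons z w p x : pcount (z :: w) p.+1 x = (z == x) + pcount w p x.
Proof. by rewrite /pcount /= eq_sym. Qed.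

Lemma filter_pair_sym w x y :
  [seq z <- w | (z == x) || (z == y)] = [seq z <- w | (z == y) || (z == x)].
Proof. by apply: eq_filter => z; rewrite orbC. Qed.

Lemma alternate_sym w x y : alternate w x y = alternate w y x.
Proof. by rewrite /alternate filter_pair_sym. Qed.

Lemma path_alternate_leads w x y : x != y ->
  path (fun a b => a != b) x [seq z <- w | (z == x) || (z == y)] <-> leads w y x.
Proof.
elim: w x y => [|z w IH] x y xy /=; first by split => // _ p; rewrite /pcount.
have [-> | zx] := eqVneq z x.
  rewrite /= eqxx; split => // /(_ 1).
  by rewrite /pcount /= take0 /= eqxx (negbTE xy).
have [zy | zy] := eqVneq z y.
  subst z; rewrite /= xy /= filter_pair_sym (IH y x); last by rewrite eq_sym.
  split => H p; last by move: (H p.+1); rewrite !pcount_cons eqxx (negbTE zx); lia.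
  case: p => [|p]; rewrite ?pcount0 // !pcount_cons eqxx (negbTE zx).
  by move: (H p); lia.
rewrite /= (IH x y xy); split => H p.
  by case: p => [|p]; rewrite ?pcount0 // !pcount_cons (negbTE zx) (negbTE zy); apply: H.
by move: (H p.+1); rewrite !pcount_cons (negbTE zx) (negbTE zy).
Qed.

Definition interleaved w x y := leads w x y \/ leads w y x.

Lemma alternate_interleaved w x y : x != y -> alternate w x y <-> interleaved w x y.
Proof.
move=> xy; rewrite /alternate /interleaved.
have Lx := path_alternate_leads w xy.
have Ly : path (fun a b => a != b) y [seq z <- w | (z == x) || (z == y)] <-> leads w x y.
  by rewrite filter_pair_sym; apply: path_alternate_leads; rewrite eq_sym.
have -> : sorted (fun a b => a != b) [seq z <- w | (z == x) || (z == y)] =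
    path (fun a b => a != b) x [seq z <- w | (z == x) || (z == y)]
    || path (fun a b => a != b) y [seq z <- w | (z == x) || (z == y)].
  have : all (fun z => (z == x) || (z == y)) [seq z <- w | (z == x) || (z == y)].
    by apply/allP => z; rewrite mem_filter => /andP[].
  case: [seq z <- w | _] => [|a s] //= /andP[/orP[] /eqP-> _].
    by rewrite eqxx /= eq_sym xy.
  by rewrite eqxx xy /= orbF.
split; first by case/orP => [/Lx|/Ly]; [right|left].
by case=> [/Ly|/Lx] ->; rewrite ?orbT.
Qed.

Lemma leads_first w x y : x \in w -> index x w < index y w -> ~ leads w y x.
Proof.
move=> xw lt /(_ (index x w).+1).
have -> : pcount w (index x w).+1 y = 0.
  apply/eqP; rewrite -leqn0 leqNgt -has_count has_pred1.
  by apply: contraL lt => /index_ltn; rewrite ltnS -leqNgt.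
suff : 0 < pcount w (index x w).+1 x by lia.
by rewrite -has_count has_pred1 in_take.
Qed.

Lemma interleaved_quadruple w v x1 x2 x3 x4 :
  leads w x1 x2 -> leads w x2 x3 -> leads w x3 x4 -> leads w x1 x4 ->
  let I := interleaved w v in
  (I x1 -> I x3 -> I x2 \/ I x4) /\ (I x2 -> I x4 -> I x1 \/ I x3).
Proof.
move=> l12 l23 l34 l14 I; split.
  case=> a1 [] a3; [left; left | left; left | right; left | left; right]; move=> p;
    by move: (l12 p) (l23 p) (l34 p) (l14 p) (a1 p) (a3 p); lia.
case=> a2 [] a4; [right; left | right; left | left; right | right; right]; move=> p;
  by move: (l12 p) (l23 p) (l34 p) (l14 p) (a2 p) (a4 p); lia.
Qed.

End Leads.

Definition cdist m s i := if s <= i then i - s else i + m - s.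
Definition cshift m s k := if s + k < m then s + k else s + k - m.

Definition carc m (s : 'I_m) t := [set i : 'I_m | cdist m s i < t].

Lemma cshift_lt m s k : s < m -> k < m -> cshift m s k < m.
Proof. by move=> ? ?; rewrite /cshift; case: ifP; lia. Qed.

Lemma cshiftK m s i : s < m -> i < m -> cshift m s (cdist m s i) = i.
Proof. by move=> ? ?; rewrite /cshift /cdist; do 2 case: ifP; lia. Qed.

Lemma cdistK m s k : s < m -> k < m -> cdist m s (cshift m s k) = k.
Proof. by move=> ? ?; rewrite /cshift /cdist; do 2 case: ifP; lia. Qed.

Lemma cdist_sym m s i : s < m -> i < m -> s != i -> cdist m s i + cdist m i s = m.
Proof. by move=> ? ? /eqP; rewrite /cdist; do 2 case: ifP; lia. Qed.

Lemma card_carc m (s : 'I_m) t : t <= m -> #|carc s t| = t.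
Proof.
case: m s => [[] // | n] s tm.
have ltm (k : 'I_t) : k < n.+1 := leq_trans (ltn_ord k) tm.
have -> : carc s t = [set inord (cshift n.+1 s k) | k : 'I_t].
  apply/setP => i; rewrite inE; apply/idP/imsetP => [it | [k _ ->]].
    by exists (Ordinal it); rewrite // cshiftK // inord_val.
  by rewrite inordK ?cshift_lt // cdistK.
rewrite card_imset ?card_ord // => k1 k2 /(congr1 (fun i : 'I_n.+1 => cdist n.+1 s i)).
by rewrite !inordK ?cshift_lt // !cdistK // => /val_inj.
Qed.

Lemma convex_interval (Q : pred nat) n : 0 < n ->
  (forall i j k, i < j < k -> k < n -> Q i -> Q k -> Q j) ->
  exists a b, [/\ a < n, a <= b <= n & forall i, i < n -> Q i = (a <= i < b)].
Proof.
move=> n0 convQ.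
case: (boolP [exists i : 'I_n, Q i]) => [/existsP [i0 Qi0] | /existsPn none].
  have exa : exists i, (i < n) && Q i by exists i0; rewrite ltn_ord.
  have [a /andP[an Qa] amin] := ex_minnP exa.
  have exb : exists k, (a <= k) && ((n <= k) || ~~ Q k).
    by exists n; rewrite ltnW ?leqnn.
  have [b /andP[ab bQ] bmin] := ex_minnP exb.
  have bn : b <= n by apply: bmin; rewrite ltnW ?leqnn.
  exists a, b; split; rewrite ?ab ?bn // => i im.
  apply/idP/idP => [Qi | /andP[ai ib]]; last first.
    by apply: contraLR ib => nQi; rewrite -leqNgt bmin // ai nQi orbT.
  rewrite (amin i) ?im //=; apply: contraLR Qi; rewrite -leqNgt => bi.
  have {}bQ : ~~ Q b by move: bQ; rewrite leqNgt (leq_ltn_trans bi im).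
  have [<- // | ltbi] := eqVneq b i.
  have ltab : a < b by rewrite ltn_neqAle ab andbT; apply: contraNneq bQ => <-.
  by apply: contra bQ => Qi; apply: convQ Qa Qi; rewrite // ltab ltn_neqAle ltbi bi.
exists 0, 0; split => // i im; apply/negbTE.
exact: (none (Ordinal im)).
Qed.

Lemma cyclic_arc m (P : pred nat) : 0 < m ->
  (forall i j k l, i < j < k -> k < l < m ->
     (P i -> P k -> P j || P l) /\ (P j -> P l -> P i || P k)) ->
  exists2 s, s < m & exists2 t, t <= m & forall i, i < m -> P i = (cdist m s i < t).
Proof.
move=> m0 noquad.
have quad0 i j k : i < j < k -> k < m -> 0 < i ->
    (P 0 -> P j -> P i || P k) /\ (P i -> P k -> P 0 || P j).
  by move=> /andP[ij jk] km i0; apply: noquad; rewrite ?i0 ?ij ?jk ?km.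
case P0: (P 0).
  have convnP i j k : i < j < k -> k < m -> ~~ P i -> ~~ P k -> ~~ P j.
    move=> /andP[ij jk] km nPi nPk; apply/negP => Pj.
    have i0 : 0 < i by move: nPi; case: i {ij} => //; rewrite P0.
    have [+ _] := quad0 i j k (introT andP (conj ij jk)) km i0.
    by move/(_ P0 Pj); rewrite (negbTE nPi) (negbTE nPk).
  have [a [b [am /andP[ab bm] nPab]]] := convex_interval m0 convnP.
  have {}nPab i : i < m -> P i = ~~ (a <= i < b) by move=> im; rewrite -nPab ?negbK.
  have [bm' | mb] := ltnP b m.
    exists b => //; exists (m - b + a); first lia.
    by move=> i im; rewrite nPab // /cdist; case: ifP; lia.
  exists 0 => //; exists a; first lia.
  by move=> i im; rewrite nPab // /cdist /=; lia.
have convP i j k : i < j < k -> k < m -> P i -> P k -> P j.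
  move=> /andP[ij jk] km Pi Pk.
  have i0 : 0 < i by move: Pi; case: i {ij} => //; rewrite P0.
  have [_ +] := quad0 i j k (introT andP (conj ij jk)) km i0.
  by move/(_ Pi Pk); rewrite P0.
have [a [b [am /andP[ab bm] Pab]]] := convex_interval m0 convP.
exists a => //; exists (b - a); first lia.
by move=> i im; rewrite Pab // /cdist; case: ifP; lia.
Qed.

Section CliqueOrder.
Variables (T : finType) (e : rel T) (w : seq T) (K : {set T}) (x0 : T).
Hypotheses (rep : represents e w) (clK : is_clique e K).

Definition occurrence_sort := sort (fun x y => index x w <= index y w) (enum K).
Local Notation L := occurrence_sort.
Local Notation X := (nth x0 L).

Lemma size_occurrence_sort : size L = #|K|.
Proof. by rewrite size_sort cardE. Qed.

Lemma mem_occurrence_sort x : (x \in L) = (x \in K).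
Proof. by rewrite mem_sort mem_enum. Qed.

Lemma uniq_occurrence_sort : uniq L.
Proof. by rewrite sort_uniq enum_uniq. Qed.

Lemma occurrence_sort_in i : i < #|K| -> X i \in K.
Proof. by move=> iK; rewrite -mem_occurrence_sort mem_nth ?size_occurrence_sort. Qed.

Lemma occurrence_sort_inj : injective (fun i : 'I_#|K| => X i).
Proof.
move=> i j /eqP; rewrite nth_uniq ?size_occurrence_sort ?uniq_occurrence_sort //.
by move/eqP/val_inj.
Qed.

Lemma index_occurrence_sort_lt i j : i < j < #|K| -> index (X i) w < index (X j) w.
Proof.
move=> /andP[ij jK]; have iK := ltn_trans ij jK.
have sortedL : sorted (fun x y => index x w <= index y w) L.
  by apply: sort_sorted => x y; apply: leq_total.
have le : index (X i) w <= index (X j) w.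
  apply: (sorted_ltn_nth _ x0 sortedL); rewrite ?inE ?size_occurrence_sort //.
  by move=> y x z; apply: leq_trans.
rewrite ltn_neqAle le andbT; apply: contraTneq ij => /index_inj eqX.
rewrite -leqNgt leq_eqVlt -(nth_uniq x0 _ _ uniq_occurrence_sort) ?size_occurrence_sort //.
by rewrite eqX ?eqxx // (proj1 rep).
Qed.

Lemma occurrence_sort_leads i j : i < j < #|K| -> leads w (X i) (X j).
Proof.
move=> ijK; have /andP[ij jK] := ijK; have iK := ltn_trans ij jK.
have lt := index_occurrence_sort_lt ijK.
have ne : X i != X j by apply: contraTneq lt => ->; rewrite ltnn.
have : alternate w (X i) (X j).
  by apply/(proj2 rep _ _ ne)/clK; rewrite ?occurrence_sort_in.
case/(alternate_interleaved _ ne) => // /leads_first.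
by case; rewrite ?(proj1 rep).
Qed.

Lemma nbhd_occurrence_arc v : 0 < #|K| -> v \notin K -> nbhd e v \subset K ->
  exists s : 'I_#|K|, exists2 t, t <= #|K| & nbhd e v = [set X i | i : 'I_#|K| in carc s t].
Proof.
move=> K0 vK nbK.
have PI i : i < #|K| -> reflect (interleaved w v (X i)) (e v (X i)).
  move=> iK; have ne : v != X i.
    by apply: contraNneq vK => ->; apply: occurrence_sort_in.
  apply: (iffP idP) => H.
    exact/(alternate_interleaved _ ne)/(proj2 rep _ _ ne).
  exact/(proj2 rep _ _ ne)/(alternate_interleaved _ ne).
have noquad i j k l : i < j < k -> k < l < #|K| ->
    (e v (X i) -> e v (X k) -> e v (X j) || e v (X l)) /\
    (e v (X j) -> e v (X l) -> e v (X i) || e v (X k)).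
  move=> /andP[ij jk] /andP[kl lK].
  have kK := ltn_trans kl lK; have jK := ltn_trans jk kK; have iK := ltn_trans ij jK.
  have [H1 H2] := interleaved_quadruple v
    (occurrence_sort_leads (introT andP (conj ij jK)))
    (occurrence_sort_leads (introT andP (conj jk kK)))
    (occurrence_sort_leads (introT andP (conj kl lK)))
    (occurrence_sort_leads (introT andP (conj (ltn_trans ij (ltn_trans jk kl)) lK))).
  split.
    move=> /(PI i iK) Ii /(PI k kK) Ik.
    by case: (H1 Ii Ik) => [/(PI j jK) | /(PI l lK)] ->; rewrite ?orbT.
  move=> /(PI j jK) Ij /(PI l lK) Il.
  by case: (H2 Ij Il) => [/(PI i iK) | /(PI k kK)] ->; rewrite ?orbT.
have [s sK [t tK arcP]] := cyclic_arc K0 noquad.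
exists (Ordinal sK); exists t => //.
apply/setP => u; rewrite inE; apply/idP/imsetP => [evu | [i ist ->]]; last first.
  by move: ist; rewrite inE arcP.
have uK : u \in L by rewrite mem_occurrence_sort (subsetP nbK) ?inE.
have iK : index u L < #|K| by rewrite -size_occurrence_sort index_mem.
by exists (Ordinal iK); rewrite ?inE /= ?nth_index // -arcP ?nth_index.
Qed.

End CliqueOrder.

Lemma distinct_nbhds_card_le (T : finType) (e : rel T) (K A : {set T}) d :
  word_representable e -> is_clique e K -> 0 < #|K| -> [disjoint A & K] ->
  {in A, forall v, nbhd e v \subset K} -> {in A, forall v, degree e v = d} ->
  {in A &, injective (nbhd e)} -> #|A| <= #|K|.
Proof.
move=> [w rep] clK K0 AK nbA degA injA.
have /card_gt0P [x0 _] := K0.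
pose X (i : 'I_#|K|) := nth x0 (occurrence_sort w K) i.
pose arcs := [set [set X i | i in carc s d] | s : 'I_#|K|].
have arcsK : #|arcs| <= #|K| by rewrite (leq_trans (leq_imset_card _ _)) ?card_ord.
rewrite -(card_in_imset injA) (leq_trans _ arcsK) //.
apply/subset_leq_card/subsetP => _ /imsetP[v vA ->].
have vK : v \notin K by rewrite (disjointFr AK vA).
have [s [t tK Nv]] := nbhd_occurrence_arc x0 rep clK K0 vK (nbA v vA).
rewrite /arcs; suff <- : #|carc s t| = d by rewrite Nv card_carc // imset_f.
by rewrite -(degA v vA) /degree Nv card_imset //; apply: occurrence_sort_inj.
Qed.

Lemma split_graph_nbhd_sub (T : finType) (e : rel T) (E K : {set T}) v :
  split_graph e E K -> v \in E -> nbhd e v \subset K.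
Proof.
case=> _ EK _ indE _ vE; apply/subsetP => u; rewrite inE => evu.
apply: contraLR evu => uK; apply: indE => //.
by move/setP/(_ u): EK; rewrite !inE (negbTE uK) orbF.
Qed.

Section SlotWords.
Variable T : eqType.
Implicit Types (f : nat -> option T) (x y : T).

Definition slot_word f N := pmap f (iota 0 N).

Lemma mem_slot_word f N x s : s < N -> f s = Some x -> x \in slot_word f N.
Proof. by move=> sN fs; rewrite mem_pmap; apply/mapP; exists s; rewrite ?mem_iota. Qed.

Lemma path_filter_iota (P : pred nat) (r : rel nat) :
  (forall g g', g < g' -> P g -> P g' -> (forall h, g < h < g' -> ~~ P h) -> r g g') ->
  forall n a g, g < a -> P g -> (forall h, g < h < a -> ~~ P h) ->
  path r g [seq z <- iota a n | P z].
Proof.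
move=> consec; elim=> [|n IH] a g ga Pg between //=.
case: ifP => Pa /=.
  by rewrite consec //= IH // => h; lia.
apply: IH => // [|h /andP[gh ha]]; first exact: ltnW.
have [-> // | ne] := eqVneq h a; first by rewrite Pa.
by apply: between; move: gh ha ne; lia.
Qed.

Lemma sorted_filter_iota (P : pred nat) (r : rel nat) n a :
  (forall g g', g < g' -> P g -> P g' -> (forall h, g < h < g' -> ~~ P h) -> r g g') ->
  sorted r [seq z <- iota a n | P z].
Proof.
move=> consec; elim: n a => [|n IH] a //=.
by case: ifP => Pa //=; apply: path_filter_iota => // h; lia.
Qed.

Lemma pmap_odflt f x l : all (fun k => f k != None) l -> pmap f l = map (odflt x \o f) l.
Proof. by elim: l => [|k l IH] //= /andP[]; case: (f k) => //= z _ /IH ->. Qed.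

Lemma alternate_slot_word f N x y :
  (forall s s', s < s' -> f s = Some x -> f s' = Some x ->
     exists2 h, s < h < s' & f h = Some y) ->
  (forall s s', s < s' -> f s = Some y -> f s' = Some y ->
     exists2 h, s < h < s' & f h = Some x) ->
  alternate (slot_word f N) x y.
Proof.
move=> betweenx betweeny; rewrite /alternate.
pose P k := (f k == Some x) || (f k == Some y).
have -> : [seq z <- slot_word f N | (z == x) || (z == y)] = pmap f [seq k <- iota 0 N | P k].
  rewrite /slot_word; elim: (iota 0 N) => [|k l IH] //=.
  case E: (f k) => [z|] /=; rewrite IH /P E //=.
  by case: ifP => //= _; rewrite E.
rewrite (pmap_odflt x); last first.
  by apply/allP => k; rewrite mem_filter /P => /andP[/orP[] /eqP ->].
rewrite sorted_map; apply: sorted_filter_iota => s s' ss' Ps Ps' noP /=.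
apply/negP => /eqP eqs.
have fss : f s = f s'.
  by move: Ps Ps' eqs; rewrite /P; case: (f s) => [a|]; case: (f s') => [b|] //= _ _ ->.
case/orP: Ps => /eqP fs; rewrite fs in fss.
  have [h shs' fh] := betweenx s s' ss' fs (esym fss).
  by move: (noP h shs'); rewrite /P fh eqxx orbT.
have [h shs' fh] := betweeny s s' ss' fs (esym fss).
by move: (noP h shs'); rewrite /P fh eqxx.
Qed.

Lemma not_alternate_repeat (w1 w2 w3 : seq T) x y : y \notin w2 ->
  ~ alternate (w1 ++ x :: w2 ++ x :: w3) x y.
Proof.
move=> yw2; rewrite /alternate filter_cat /= eqxx /= filter_cat /= eqxx /=.
set f2 := [seq z <- w2 | _].
have allx : all (pred1 x) f2.
  apply/allP => z; rewrite mem_filter => /andP[/orP[// | /eqP ->] yin].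
  by rewrite yin in yw2.
case/cat_sorted2 => _.
case: f2 allx => [|b f2] /=; first by rewrite eqxx.
by case/andP => /eqP -> _; rewrite eqxx.
Qed.

Lemma not_alternate_slot_word f N s s' x y :
  s < s' < N -> f s = Some x -> f s' = Some x -> (forall h, s < h < s' -> f h != Some y) ->
  ~ alternate (slot_word f N) x y.
Proof.
move=> /andP[ss' s'N] fs fs' noy.
have -> : slot_word f N = slot_word f s ++ x :: pmap f (iota s.+1 (s' - s.+1)) ++
                          x :: pmap f (iota s'.+1 (N - s'.+1)).
  have eN : N = s + ((s' - s.+1).+1 + (N - s'.+1).+1) by lia.
  rewrite /slot_word [in LHS]eN iotaD add0n iotaD /=.
  have -> : s + (s' - s.+1).+1 = s' by lia.
  by rewrite !pmap_cat /= fs /= pmap_cat /= fs'.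
apply: not_alternate_repeat; rewrite mem_pmap; apply/mapP => [[h]].
rewrite mem_iota => /andP[h1 h2] /esym fh.
suff : s < h < s' by move/noy; rewrite fh eqxx.
lia.
Qed.

End SlotWords.

Section ArcGraph.
Variables n d : nat.
Local Notation m := n.+1.
Hypotheses (d_gt0 : 0 < d) (d_lt_m : d < m) (dm : d.*2 <= m.+1).

Definition arc_vertex : finType := ('I_m + 'I_m)%type.

(* [inl i] is the clique vertex [i], [inr a] is adjacent to the arc of the [d]
   clique vertices starting at [a]. *)
Definition arc_edge : rel arc_vertex := fun x y =>
  match x, y with
  | inl i, inl j => i != j
  | inl i, inr a | inr a, inl i => cdist m a i < d
  | inr _, inr _ => false
  end.

(* Slot [3 g + 2], with [g = q m + i] and round [q <= m], holds the clique vertex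
   [i] and slot [3 g + 1] the vertex [inr i], except in round [q = i + 1]: that
   copy of [inr a] is moved back to slot [3 (a m + a + d)], just before the clique
   vertex [a + d] (mod [m]), so that [inr a] alternates exactly with [a, ..., a + d - 1]. *)
Definition arc_slot (s : nat) : option arc_vertex :=
  let g := s %/ 3 in
  if s %% 3 == 0 then omap inr [pick a : 'I_m | a * m.+1 + d == g]
  else if s %% 3 == 1 then
    (if (g %/ m <= m) && (g %/ m != (g %% m).+1) then Some (inr (inord (g %% m))) else None)
  else if g %/ m <= m then Some (inl (inord (g %% m))) else None.

Definition arc_word := slot_word arc_slot (3 * (m * m.+1).+1).

Lemma arc_slot_inl s (i : 'I_m) :
  arc_slot s = Some (inl i) <-> exists2 q, q <= m & s = 3 * (q * m + i) + 2.
Proof.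
rewrite /arc_slot; split.
  case: ifP => h0; first by case: pickP.
  case: ifP => h1; first by case: ifP.
  case: ifP => // hq [] <-; exists (s %/ 3 %/ m) => //.
  rewrite inordK ?ltn_pmod //.
  by have := divn_eq (s %/ 3) m; move: h0 h1; lia.
move=> [q qm ->].
have -> : (3 * (q * m + i) + 2) %% 3 = 2 by lia.
have -> : (3 * (q * m + i) + 2) %/ 3 = q * m + i by lia.
have -> : (q * m + i) %/ m = q by have := ltn_ord i; nia.
have -> : (q * m + i) %% m = i by rewrite modnMDl modn_small.
by rewrite qm inord_val.
Qed.

Lemma arc_slot_inr s (a : 'I_m) : arc_slot s = Some (inr a) <->
  s = 3 * (a * m.+1 + d) \/ exists q, [/\ q <= m, q != a.+1 & s = 3 * (q * m + a) + 1].
Proof.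
rewrite /arc_slot; split.
  case: ifP => h0.
    case: pickP => [c /eqP hc|] //= [] ec; subst c; left.
    by move: h0 hc; lia.
  case: ifP => h1; last by case: ifP.
  case: ifP => // /andP[hq hq2] [] <-; right; exists (s %/ 3 %/ m).
  rewrite inordK ?ltn_pmod //; split => //.
  by have := divn_eq (s %/ 3) m; move: h0 h1; lia.
case=> [-> | [q [qm qa ->]]].
  have -> : (3 * (a * m.+1 + d)) %% 3 = 0 by lia.
  have -> : (3 * (a * m.+1 + d)) %/ 3 = a * m.+1 + d by lia.
  rewrite eqxx; case: pickP => [c /eqP hc|]; last by move/(_ a); rewrite eqxx.
  by congr (Some (inr _)); apply: val_inj => /=; move: hc; nia.
have -> : (3 * (q * m + a) + 1) %% 3 = 1 by lia.
have -> : (3 * (q * m + a) + 1) %/ 3 = q * m + a by lia.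
have -> : (q * m + a) %/ m = q by have := ltn_ord a; nia.
have -> : (q * m + a) %% m = a by rewrite modnMDl modn_small.
by rewrite qm qa inord_val.
Qed.

Lemma arc_slot_clique (i : 'I_m) q : q <= m -> arc_slot (3 * (q * m + i) + 2) = Some (inl i).
Proof. by move=> qm; apply/arc_slot_inl; exists q. Qed.

Lemma arc_slot_regular (a : 'I_m) q :
  q <= m -> q != a.+1 -> arc_slot (3 * (q * m + a) + 1) = Some (inr a).
Proof. by move=> qm qa; apply/arc_slot_inr; right; exists q. Qed.

Lemma arc_slot_moved (a : 'I_m) : arc_slot (3 * (a * m.+1 + d)) = Some (inr a).
Proof. by apply/arc_slot_inr; left. Qed.

Lemma mem_arc_word x : x \in arc_word.
Proof.
case: x => [i | a].
  apply: (mem_slot_word (s := 3 * (0 * m + i) + 2)); last exact: arc_slot_clique.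
  by have := ltn_ord i; nia.
apply: (mem_slot_word (s := 3 * (0 * m + a) + 1)); last exact: arc_slot_regular.
by have := ltn_ord a; nia.
Qed.

Lemma clique_between (c c' : 'I_m) s s' : c != c' -> s < s' ->
  arc_slot s = Some (inl c) -> arc_slot s' = Some (inl c) ->
  exists2 h, s < h < s' & arc_slot h = Some (inl c').
Proof.
move=> cc' ss' /arc_slot_inl[q qm es] /arc_slot_inl[q' q'm es']; subst s s'.
have cm := ltn_ord c; have c'm := ltn_ord c'.
have qq : q < q' by nia.
have [cl | cg] := ltnP c c'.
  by exists (3 * (q * m + c') + 2); rewrite ?arc_slot_clique //; nia.
have {}cg : c' < c by rewrite ltn_neqAle eq_sym cc' cg.
exists (3 * (q.+1 * m + c') + 2); last by rewrite arc_slot_clique // (leq_trans qq q'm).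
by nia.
Qed.

Lemma arc_between_independent (a i : 'I_m) s s' : cdist m a i < d -> s < s' ->
  arc_slot s = Some (inr a) -> arc_slot s' = Some (inr a) ->
  exists2 h, s < h < s' & arc_slot h = Some (inl i).
Proof.
move=> ai ss' /arc_slot_inr fs /arc_slot_inr fs'.
have am := ltn_ord a; have im := ltn_ord i.
case: fs => [es | [q [qm qa es]]]; case: fs' => [es' | [q' [q'm q'a es']]]; subst s s'.
- by rewrite ltnn in ss'.
- have q'2 : a.+2 <= q' by move/eqP: q'a => q'a; nia.
  move: ai; rewrite /cdist; case: (leqP a i) => ia ai.
    by exists (3 * (a.+1 * m + i) + 2); rewrite ?arc_slot_clique //; nia.
  by exists (3 * (a.+2 * m + i) + 2); rewrite ?arc_slot_clique //; nia.
- have qa' : q <= a by nia.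
  move: ai; rewrite /cdist; case: (leqP a i) => ia ai.
    by exists (3 * (q * m + i) + 2); rewrite ?arc_slot_clique //; nia.
  by exists (3 * (q.+1 * m + i) + 2); rewrite ?arc_slot_clique //; nia.
have qq : q < q' by nia.
move: ai; rewrite /cdist; case: (leqP a i) => ia ai.
  by exists (3 * (q * m + i) + 2); rewrite ?arc_slot_clique //; nia.
by exists (3 * (q.+1 * m + i) + 2); rewrite ?arc_slot_clique //; nia.
Qed.

Lemma independent_between_arc (a i : 'I_m) s s' : cdist m a i < d -> s < s' ->
  arc_slot s = Some (inl i) -> arc_slot s' = Some (inl i) ->
  exists2 h, s < h < s' & arc_slot h = Some (inr a).
Proof.
move=> ai ss' /arc_slot_inl[q qm es] /arc_slot_inl[q' q'm es']; subst s s'.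
have am := ltn_ord a; have im := ltn_ord i.
have qq : q < q' by nia.
move: ai; rewrite /cdist; case: (leqP a i) => ia ai.
  have [qa | qa] := eqVneq q a.
    by subst q; exists (3 * (a * m.+1 + d)); rewrite ?arc_slot_moved //; nia.
  by exists (3 * (q.+1 * m + a) + 1); rewrite ?arc_slot_regular ?eqSS //; nia.
have [qa | qa] := eqVneq q a.+1.
  by subst q; exists (3 * (a * m.+1 + d)); rewrite ?arc_slot_moved //; nia.
by exists (3 * (q * m + a) + 1); rewrite ?arc_slot_regular //; nia.
Qed.

Definition arc_index (x : arc_vertex) : 'I_m := match x with inl i | inr i => i end.

Lemma arc_slot_before_moved (a : 'I_m) h x :
  3 * (a * m + a) + 1 < h < 3 * (a * m.+1 + d) -> arc_slot h = Some x ->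
  cdist m a (arc_index x) < d.
Proof.
move=> hb; have am := ltn_ord a; rewrite /cdist.
case: x => [i | b] /=.
  case/arc_slot_inl => q qm eh; subst h; have im := ltn_ord i.
  by case: (leqP a i) => ai; [have qa : q = a by nia | have qa : q = a.+1 by nia];
    subst q; nia.
case/arc_slot_inr => [eh | [q [qm qb eh]]]; subst h; have bm := ltn_ord b.
  by case: (leqP a b) => ab; nia.
by case: (leqP a b) => ab; [have qa : q = a by nia | have qa : q = a.+1 by nia];
  subst q; nia.
Qed.

Lemma not_alternate_off_arc (a : 'I_m) x :
  d <= cdist m a (arc_index x) -> ~ alternate arc_word (inr a) x.
Proof.
move=> off; have am := ltn_ord a.
apply: (not_alternate_slot_word (s := 3 * (a * m + a) + 1) (s' := 3 * (a * m.+1 + d))).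
- by apply/andP; split; nia.
- by rewrite arc_slot_regular // ?(ltnW am) //; lia.
- exact: arc_slot_moved.
move=> h hb; apply/eqP => /(arc_slot_before_moved hb).
by rewrite ltnNge off.
Qed.

Lemma alternate_arc (a i : 'I_m) : cdist m a i < d -> alternate arc_word (inr a) (inl i).
Proof.
move=> ai; apply: alternate_slot_word => s s' ss' fs fs'.
  exact: arc_between_independent fs fs'.
exact: independent_between_arc fs fs'.
Qed.

Lemma alternate_clique (i j : 'I_m) : i != j -> alternate arc_word (inl i) (inl j).
Proof.
move=> ij; apply: alternate_slot_word => s s' ss' fs fs'; apply: clique_between fs fs' => //.
by rewrite eq_sym.
Qed.

Lemma alternate_arc_edge (a i : 'I_m) : alternate arc_word (inr a) (inl i) <-> cdist m a i < d.
Proof.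
split => [alt | /alternate_arc //]; rewrite ltnNge; apply/negP => off.
exact: (not_alternate_off_arc (x := inl i)) off alt.
Qed.

Lemma represents_arc_word : represents arc_edge arc_word.
Proof.
split => [x | [i | a] [j | b] xy /=]; first exact: mem_arc_word.
- have ij : i != j by apply: contraNneq xy => ->.
  by rewrite ij; split => // _; apply: alternate_clique.
- by rewrite alternate_sym alternate_arc_edge.
- exact: alternate_arc_edge.
have ab : a != b by apply: contraNneq xy => ->.
split => // alt; exfalso; have [off | near] := leqP d (cdist m a b).
  exact: (not_alternate_off_arc (x := inr b)) off alt.
apply: (@not_alternate_off_arc b (inr a)); last by rewrite alternate_sym.
by have := cdist_sym (ltn_ord a) (ltn_ord b) ab; rewrite /=; lia.
Qed.

Definition arc_clique : {set arc_vertex} := [set inl i | i : 'I_m].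
Definition arc_independent : {set arc_vertex} := [set inr a | a : 'I_m].

Lemma mem_arc_clique x : (x \in arc_clique) = (if x is inl _ then true else false).
Proof. by case: x => [i | a]; apply/imsetP; [exists i | case]. Qed.

Lemma mem_arc_independent x : (x \in arc_independent) = (if x is inr _ then true else false).
Proof. by case: x => [i | a]; apply/imsetP; [case | exists a]. Qed.

Lemma card_arc_clique : #|arc_clique| = m.
Proof. by rewrite card_imset ?card_ord //; apply: inl_inj. Qed.

Lemma card_arc_independent : #|arc_independent| = m.
Proof. by rewrite card_imset ?card_ord //; apply: inr_inj. Qed.

Lemma arc_simple : simple_graph arc_edge.
Proof. by split => [[i | a] | [i | a] [j | b]] //=; rewrite ?eqxx // eq_sym. Qed.

Lemma arc_split : split_graph arc_edge arc_independent arc_clique.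
Proof.
split.
- by apply/pred0P => x; rewrite /= mem_arc_clique mem_arc_independent; case: x.
- by apply/setP => x; rewrite !inE mem_arc_clique mem_arc_independent; case: x.
- by move=> [i | a] [j | b]; rewrite ?mem_arc_clique //= => _ _ ->.
- by move=> [i | a] [j | b]; rewrite ?mem_arc_independent.
case=> [i | a]; rewrite mem_arc_clique // => _.
have am := ltn_ord a; have nm : n < m by [].
exists (inl (inord (cshift m a n))); first by rewrite mem_arc_clique.
by rewrite /= inordK ?cshift_lt // cdistK // -leqNgt -ltnS.
Qed.

Lemma nbhd_arc_independent (a : 'I_m) : nbhd arc_edge (inr a) = inl @: carc a d.
Proof.
apply/setP => [[i | b]]; rewrite !inE /=; last by apply/esym/imsetP => -[].
by rewrite (mem_imset _ _ (@inl_inj _ _)) inE.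
Qed.

Lemma degree_arc_independent (a : 'I_m) : degree arc_edge (inr a) = d.
Proof.
rewrite /degree nbhd_arc_independent card_imset ?card_carc ?(ltnW d_lt_m) //.
exact: inl_inj.
Qed.

Lemma arc_nbhd_inj : {in arc_independent &, injective (nbhd arc_edge)}.
Proof.
move=> [i | a] [j | b]; rewrite ?mem_arc_independent // => _ _ eqN.
have self c : inl c \in nbhd arc_edge (inr c) by rewrite inE /= /cdist leqnn subnn.
have ab := self a; have ba := self b; rewrite eqN inE /= in ab; rewrite -eqN inE /= in ba.
have [-> // | neq] := eqVneq a b.
by have := cdist_sym (ltn_ord a) (ltn_ord b) neq; move: ab ba dm; lia.
Qed.

End ArcGraph.

Theorem theorem12 :
  (forall (T : finType) (e : rel T) (E K : {set T}) (m d : nat),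
      simple_graph e -> split_graph e E K -> #|K| = m ->
      word_representable e ->
      3 <= m -> 2 <= d -> d.*2 <= m.+1 ->
      forall A : {set T},
        A \subset E ->
        (forall v, v \in A -> degree e v = d) ->
        {in A &, injective (nbhd e)} ->
        #|A| <= m)
  /\
  (forall m d : nat, 3 <= m -> 2 <= d -> d.*2 <= m.+1 ->
    exists (T : finType) (e : rel T) (E K : {set T}),
      [/\ simple_graph e, split_graph e E K, #|K| = m,
          word_representable e &
          exists A : {set T},
            [/\ A \subset E, #|A| = m,
                (forall v, v \in A -> degree e v = d) &
                {in A &, injective (nbhd e)}]]).
Proof.
split.
  move=> T e E K m d _ sEK <- repr m3 _ _ A AE degA injA.
  have [EK _ clK _ _] := sEK.
  apply: (distinct_nbhds_card_le repr clK _ (disjointWl AE EK) _ degA injA).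
    exact: leq_trans m3.
  by move=> v /(subsetP AE); apply: split_graph_nbhd_sub.
case=> [// | n] d _ d2 dm.
have d_gt0 : 0 < d by apply: leq_trans d2.
have d_lt_m : d < n.+1 by move: dm d2; lia.
exists (arc_vertex n), (arc_edge d), (arc_independent n), (arc_clique n); split.
- exact: arc_simple.
- exact: arc_split.
- exact: card_arc_clique.
- by exists (arc_word n d); apply: represents_arc_word.
exists (arc_independent n); split => //.
- exact: card_arc_independent.
- by case=> [i | a]; rewrite mem_arc_independent // => _; apply: degree_arc_independent.
exact: arc_nbhd_inj.
Qed.
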